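(* Let $(X,d)$ be a complete separable metric space without isolated points and let $f\colon X\to X$ be a continuous map. Then the following are equivalent: (1) for each $k\geq 2$, $D_k(f)$ is dense in $X^k$; (2) there exist a sequence $\{q_n\}$ in $\mathbb{N}$ and a dense $\sigma$-Cantor subset $S$ of $X$ such that for any $x,y\in S$ with $x\neq y$, $\lim_{n\to\infty} d(f^{q_n}(x),f^{q_n}(y))=\infty$.
   Context: For $k\geq 2$, $D_k(f)=\{(x_1,\dots,x_k)\in X^k: \limsup_{n\to\infty}\min_{1\leq i<j\leq k} d(f^n(x_i),f^n(x_j))=\infty\}$. A $\sigma$-Cantor set is a countable union of sets each homeomorphic to the Cantor ternary set. *)

From Stdlib Require Import Reals.
Open Scope R_scope.

Definition is_metric {X : Type} (d : X -> X -> R) : Prop :=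
  (forall x y, 0 <= d x y) /\
  (forall x y, d x y = 0 <-> x = y) /\
  (forall x y, d x y = d y x) /\
  (forall x y z, d x z <= d x y + d y z).

Definition cauchy_seq {X : Type} (d : X -> X -> R) (u : nat -> X) : Prop :=
  forall eps, 0 < eps -> exists N, forall m n, (N <= m)%nat -> (N <= n)%nat -> d (u m) (u n) < eps.

Definition converges_to {X : Type} (d : X -> X -> R) (u : nat -> X) (l : X) : Prop :=
  forall eps, 0 < eps -> exists N, forall n, (N <= n)%nat -> d (u n) l < eps.

Definition complete_metric {X : Type} (d : X -> X -> R) : Prop :=
  forall u : nat -> X, cauchy_seq d u -> exists l, converges_to d u l.

Definition countable_type (I : Type) : Prop :=
  exists g : I -> nat, forall i j, g i = g j -> i = j.

Definition countable_set {X : Type} (D : X -> Prop) : Prop :=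
  exists g : X -> nat, forall x y, D x -> D y -> g x = g y -> x = y.

Definition dense_set {X : Type} (d : X -> X -> R) (D : X -> Prop) : Prop :=
  forall x eps, 0 < eps -> exists y, D y /\ d x y < eps.

Definition separable {X : Type} (d : X -> X -> R) : Prop :=
  exists D : X -> Prop, countable_set D /\ dense_set d D.

Definition no_isolated_points {X : Type} (d : X -> X -> R) : Prop :=
  forall x eps, 0 < eps -> exists y, y <> x /\ d x y < eps.

Definition continuous_map {X : Type} (d : X -> X -> R) (f : X -> X) : Prop :=
  forall x eps, 0 < eps -> exists delta, 0 < delta /\
    forall y, d x y < delta -> d (f x) (f y) < eps.

(* A point of X^k is represented by x : nat -> X, only the coordinates
   0 <= i < k being relevant. *)
Definition D_k {X : Type} (d : X -> X -> R) (f : X -> X) (k : nat) (x : nat -> X) : Prop :=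
  (* limsup_{n} min_{0<=i<j<k} d(f^n x_i, f^n x_j) = +oo *)
  forall M N, exists n, (N <= n)%nat /\
    forall i j, (i < j)%nat -> (j < k)%nat ->
      M < d (Nat.iter n f (x i)) (Nat.iter n f (x j)).

Definition dense_in_power {X : Type} (d : X -> X -> R) (k : nat) (A : (nat -> X) -> Prop) : Prop :=
  forall (y : nat -> X) eps, 0 < eps ->
    exists x, A x /\ forall i, (i < k)%nat -> d (x i) (y i) < eps.

Fixpoint cantor_stage (n : nat) (t : R) : Prop :=
  match n with
  | O => 0 <= t <= 1
  | S m => cantor_stage m (3 * t) \/ cantor_stage m (3 * t - 2)
  end.
(* cantor_stage (S m) = C_m/3 ∪ (2/3 + C_m/3) *)

Definition cantor_ternary (t : R) : Prop := forall n, cantor_stage n t.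

Definition homeomorphic_to_cantor {X : Type} (d : X -> X -> R) (A : X -> Prop) : Prop :=
  exists h : R -> X,
    (forall t, cantor_ternary t -> A (h t)) /\
    (forall a, A a -> exists t, cantor_ternary t /\ h t = a) /\
    (forall s t, cantor_ternary s -> cantor_ternary t -> h s = h t -> s = t) /\
    (forall s eps, cantor_ternary s -> 0 < eps -> exists delta, 0 < delta /\
       forall t, cantor_ternary t -> Rabs (s - t) < delta -> d (h s) (h t) < eps) /\
    (* h^{-1} continuous on A *)
    (forall s eps, cantor_ternary s -> 0 < eps -> exists delta, 0 < delta /\
       forall t, cantor_ternary t -> d (h s) (h t) < delta -> Rabs (s - t) < eps).

Definition sigma_cantor {X : Type} (d : X -> X -> R) (S : X -> Prop) : Prop :=
  exists (I : Type) (A : I -> X -> Prop),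
    countable_type I /\
    (forall i, homeomorphic_to_cantor d (A i)) /\
    (forall x, S x <-> exists i, A i x).

From Stdlib Require Import Reals Lra Lia ClassicalEpsilon Classical.
Open Scope R_scope.

(** (2) => (1): near any k-tuple pick k distinct points of the dense set S; they are
    pairwise separated along (q_n), so the perturbed tuple lies in D_k.

    (1) => (2) is a Mycielski-type construction.  Stage n + 1 holds 2^(n+1) - 1 centres
    with a common small radius, arranged as a forest of binary trees.  Density of
    D_(2^(n+1)) lets one replace every centre of stage n by two nearby points and add a new
    root near the n-th term of a sequence that visits a countable dense set infinitely
    often, in such a way that at some time q the images under f^q of all the new balls are
    more than n + 1 apart.  Along a branch the balls are nested and shrink, so every branch
    converges.  Coding the branches of the a-th tree by the ternary digits of points of
    the Cantor set gives a homeomorphic copy of the Cantor set; the union of these copies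
    is dense because of the roots, and two distinct points of it eventually lie in balls
    around distinct centres, hence are separated along the times q. *)

Lemma fin_uniform_pos (K : nat) (P : nat -> R -> Prop) :
  (forall i e e', 0 < e' <= e -> P i e -> P i e') ->
  (forall i, (i < K)%nat -> exists e, 0 < e /\ P i e) ->
  exists e, 0 < e /\ forall i, (i < K)%nat -> P i e.
Proof.
  intros Hmono; induction K as [|K IH]; intros H.
  - exists 1; split; [lra | intros; lia].
  - destruct IH as [e [He HP]]; [intros i Hi; apply H; lia |].
    destruct (H K (Nat.lt_succ_diag_r K)) as [e0 [He0 HP0]].
    assert (Hmin : 0 < Rmin e e0) by now apply Rmin_pos.
    exists (Rmin e e0); split; [exact Hmin |].
    intros i Hi; destruct (Nat.eq_dec i K) as [-> | HiK].
    + apply (Hmono K e0); [split; [exact Hmin | apply Rmin_r] | exact HP0].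
    + apply (Hmono i e); [split; [exact Hmin | apply Rmin_l] | apply HP; lia].
Qed.

Lemma fin_uniform_nat (K : nat) (P : nat -> nat -> Prop) :
  (forall i N N', (N <= N')%nat -> P i N -> P i N') ->
  (forall i, (i < K)%nat -> exists N, P i N) ->
  exists N, forall i, (i < K)%nat -> P i N.
Proof.
  intros Hmono; induction K as [|K IH]; intros H.
  - exists 0%nat; intros; lia.
  - destruct IH as [N HN]; [intros i Hi; apply H; lia |].
    destruct (H K (Nat.lt_succ_diag_r K)) as [N0 HN0].
    exists (Nat.max N N0); intros i Hi; destruct (Nat.eq_dec i K) as [-> | HiK].
    + apply (Hmono K N0); [lia | exact HN0].
    + apply (Hmono i N); [lia | apply HN; lia].
Qed.

Lemma fin_upper_bound (K : nat) (F : nat -> R) :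
  exists B, forall i, (i < K)%nat -> F i <= B.
Proof.
  induction K as [|K [B HB]].
  - exists 0; intros; lia.
  - exists (Rmax B (F K)); intros i Hi; destruct (Nat.eq_dec i K) as [-> | HiK].
    + apply Rmax_r.
    + apply (Rle_trans _ B); [apply HB; lia | apply Rmax_l].
Qed.

Lemma nat_dependent_choice {A : Type} (P : A -> Prop) (Rel : nat -> A -> A -> Prop) (a0 : A) :
  P a0 -> (forall n a, P a -> exists b, P b /\ Rel n a b) ->
  exists s : nat -> A, forall n, Rel n (s n) (s (S n)).
Proof.
  intros H0 Hstep.
  assert (step : forall n (a : {a | P a}), {b : {a | P a} | Rel n (proj1_sig a) (proj1_sig b)}).
  { intros n [a Ha].
    destruct (constructive_indefinite_description _ (Hstep n a Ha)) as [b [Hb Hab]].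
    exact (exist _ (exist _ b Hb) Hab). }
  set (s := fix s n := match n with
                       | O => exist P a0 H0
                       | S m => proj1_sig (step m (s m))
                       end).
  exists (fun n => proj1_sig (s n)); intros n; exact (proj2_sig (step n (s n))).
Qed.

Lemma inv_succ_small eps : 0 < eps -> exists N, forall n, (N <= n)%nat -> / (INR n + 1) < eps.
Proof.
  intros Heps; destruct (INR_unbounded (/ eps)) as [N HN].
  exists N; intros n Hn.
  assert (HNn : INR N <= INR n) by now apply le_INR.
  assert (Hinv : 0 < / eps) by now apply Rinv_0_lt_compat.
  rewrite <- (Rinv_inv eps); apply Rinv_lt_contravar; [apply Rmult_lt_0_compat |]; lra.
Qed.

Lemma exists_nat_gt (M : R) : exists N : nat, M < INR N.
Proof. destruct (INR_unbounded M) as [N HN]; exists N; lra. Qed.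

Lemma pow_third_small eps : 0 < eps -> exists m, (1/3) ^ m < eps.
Proof.
  intros Heps.
  destruct (pow_lt_1_zero (1/3) ltac:(rewrite Rabs_right; lra) eps Heps) as [m Hm].
  exists m; specialize (Hm m (le_n m)).
  rewrite Rabs_right in Hm; [exact Hm | apply Rle_ge, pow_le; lra].
Qed.

(** * Ternary coding of the Cantor set *)
Definition ternary_digit (t : R) : bool := if Rle_dec t (1/2) then false else true.
Definition ternary_shift (t : R) : R := if Rle_dec t (1/2) then 3 * t else 3 * t - 2.
Definition ternary_digits (t : R) (k : nat) : bool := ternary_digit (Nat.iter k ternary_shift t).

Lemma cantor_stage_bounds n t : cantor_stage n t -> 0 <= t <= 1.
Proof.
  revert t; induction n as [|n IH]; simpl; intros t Ht; [exact Ht |].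
  destruct Ht as [Ht | Ht]; apply IH in Ht; lra.
Qed.

Lemma cantor_ternary_bounds t : cantor_ternary t -> 0 <= t <= 1.
Proof. intros Ht; exact (cantor_stage_bounds 0 t (Ht 0%nat)). Qed.

Lemma cantor_ternary_gap t : cantor_ternary t -> t <= 1/3 \/ 2/3 <= t.
Proof. intros Ht; specialize (Ht 1%nat); simpl in Ht; lra. Qed.

Lemma cantor_ternary_shift t : cantor_ternary t -> cantor_ternary (ternary_shift t).
Proof.
  intros Ht n; pose proof (cantor_ternary_gap t Ht) as Hgap.
  specialize (Ht (S n)); simpl in Ht; unfold ternary_shift.
  destruct (Rle_dec t (1/2)), Ht as [Ht | Ht]; try exact Ht;
    apply cantor_stage_bounds in Ht; lra.
Qed.

Lemma cantor_ternary0 : cantor_ternary 0.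
Proof.
  intros n; induction n as [|n IH]; simpl; [lra |].
  left; rewrite Rmult_0_r; exact IH.
Qed.

Lemma ternary_digits_succ t k :
  ternary_digits t (S k) = ternary_digits (ternary_shift t) k.
Proof. unfold ternary_digits; now rewrite Nat.iter_succ_r. Qed.

Lemma ternary_digit_neq_far s t : cantor_ternary s -> cantor_ternary t ->
  ternary_digit s <> ternary_digit t -> 1/3 <= Rabs (s - t).
Proof.
  intros Hs Ht; pose proof (cantor_ternary_gap s Hs); pose proof (cantor_ternary_gap t Ht).
  unfold ternary_digit; destruct (Rle_dec s (1/2)), (Rle_dec t (1/2)); intros Hne;
    try (exfalso; apply Hne; reflexivity).
  - rewrite Rabs_left; lra.
  - rewrite Rabs_right; lra.
Qed.

Lemma ternary_shift_sub s t : ternary_digit s = ternary_digit t ->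
  ternary_shift s - ternary_shift t = 3 * (s - t).
Proof.
  unfold ternary_digit, ternary_shift.
  destruct (Rle_dec s (1/2)), (Rle_dec t (1/2)); intros E; try discriminate; ring.
Qed.

Lemma ternary_digits_agree_close m : forall s t, cantor_ternary s -> cantor_ternary t ->
  (forall k, (k < m)%nat -> ternary_digits s k = ternary_digits t k) ->
  Rabs (s - t) <= (1/3) ^ m.
Proof.
  induction m as [|m IH]; intros s t Hs Ht Hagree.
  - pose proof (cantor_ternary_bounds s Hs); pose proof (cantor_ternary_bounds t Ht).
    simpl; apply Rabs_le; lra.
  - assert (H0 : ternary_digit s = ternary_digit t) by exact (Hagree 0%nat (Nat.lt_0_succ m)).
    assert (Hshift : Rabs (ternary_shift s - ternary_shift t) <= (1/3) ^ m).
    { apply IH; try now apply cantor_ternary_shift.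
      intros k Hk; rewrite <- !ternary_digits_succ; apply Hagree; lia. }
    rewrite ternary_shift_sub, Rabs_mult, Rabs_right in Hshift by (exact H0 || lra).
    simpl; lra.
Qed.

Lemma pow_third_le1 m : (1/3) ^ m <= 1.
Proof.
  induction m as [|m IH]; simpl; [lra |].
  pose proof (pow_le (1/3) m ltac:(lra)); lra.
Qed.

Lemma close_ternary_digits_agree m : forall s t, cantor_ternary s -> cantor_ternary t ->
  Rabs (s - t) < (1/3) ^ m ->
  forall k, (k < m)%nat -> ternary_digits s k = ternary_digits t k.
Proof.
  induction m as [|m IH]; intros s t Hs Ht Hclose k Hk; [lia |].
  assert (Hpow : (1/3) ^ m <= 1) by exact (pow_third_le1 m).
  simpl in Hclose.
  assert (H0 : ternary_digit s = ternary_digit t).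
  { destruct (Bool.bool_dec (ternary_digit s) (ternary_digit t)) as [E | E]; [exact E |].
    pose proof (ternary_digit_neq_far s t Hs Ht E); lra. }
  destruct k as [|k]; [exact H0 |].
  rewrite !ternary_digits_succ.
  apply IH; [now apply cantor_ternary_shift | now apply cantor_ternary_shift | | lia].
  rewrite ternary_shift_sub, Rabs_mult, Rabs_right by (exact H0 || lra); lra.
Qed.

(** * Indexing the forest of centres *)

Definition bit (b : bool) : nat := if b then 1%nat else 0%nat.

(* [node a b m] is the index, at stage a + 1 + m, of the centre reached from the root of
   the a-th tree along the path b. *)
Fixpoint node (a : nat) (b : nat -> bool) (m : nat) : nat :=
  match m with
  | O => 2 ^ S a - 2
  | S m => 2 * node a b m + bit (b m)
  end.

Lemma bit_le1 c : (bit c <= 1)%nat.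
Proof. destruct c; simpl; lia. Qed.

Lemma div2_child x c : Nat.div2 (2 * x + bit c) = x.
Proof.
  destruct c; simpl bit.
  - rewrite Nat.add_1_r; apply Nat.div2_succ_double.
  - rewrite Nat.add_0_r; apply Nat.div2_double.
Qed.

Lemma child_inj x y c c' : (2 * x + bit c = 2 * y + bit c')%nat -> x = y /\ c = c'.
Proof. destruct c, c'; simpl; intros; split; auto; lia. Qed.

Lemma node_lt a b m : (node a b m < 2 ^ (S a + m) - 1)%nat.
Proof.
  assert (Hpow : forall n, (2 <= 2 ^ S n)%nat).
  { intros n; rewrite Nat.pow_succ_r'; pose proof (Nat.pow_nonzero 2 n); lia. }
  induction m as [|m IH]; cbn [node].
  - rewrite Nat.add_0_r; pose proof (Hpow a); lia.
  - rewrite Nat.add_succ_r, Nat.pow_succ_r'; pose proof (bit_le1 (b m)); lia.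
Qed.

Lemma node_eq_iff a b b' m :
  node a b m = node a b' m <-> forall k, (k < m)%nat -> b k = b' k.
Proof.
  induction m as [|m IH]; cbn [node].
  - split; [intros; lia | reflexivity].
  - split.
    + intros E k Hk; apply child_inj in E as [E Em].
      destruct (Nat.eq_dec k m) as [-> | Hkm].
      * destruct (b m), (b' m); easy.
      * apply IH; [exact E | lia].
    + intros Hagree; rewrite (proj2 IH) by (intros; apply Hagree; lia).
      now rewrite (Hagree m (Nat.lt_succ_diag_r m)).
Qed.

Section Metric.

Context {X : Type} (d : X -> X -> R).
Hypothesis Hm : is_metric d.

Lemma dist_ge0 x y : 0 <= d x y.
Proof. exact (proj1 Hm x y). Qed.

Lemma dist_refl x : d x x = 0.
Proof. exact (proj2 (proj1 (proj2 Hm) x x) eq_refl). Qed.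

Lemma dist_sym x y : d x y = d y x.
Proof. exact (proj1 (proj2 (proj2 Hm)) x y). Qed.

Lemma dist_triangle x y z : d x z <= d x y + d y z.
Proof. exact (proj2 (proj2 (proj2 Hm)) x y z). Qed.

Lemma dist_pos x y : x <> y -> 0 < d x y.
Proof.
  intros Hxy; destruct (dist_ge0 x y) as [H | H]; [exact H |].
  exfalso; apply Hxy, (proj1 (proj2 Hm)); auto.
Qed.

Lemma iter_continuous f : continuous_map d f -> forall n, continuous_map d (Nat.iter n f).
Proof.
  intros Hf n; induction n as [|n IH]; intros x eps Heps.
  - exists eps; split; auto.
  - destruct (Hf (Nat.iter n f x) eps Heps) as [delta1 [Hdelta1 H1]].
    destruct (IH x delta1 Hdelta1) as [delta2 [Hdelta2 H2]].
    exists delta2; split; [exact Hdelta2 |]; intros y Hy; apply H1, H2, Hy.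
Qed.

Lemma nested_balls_limit (u : nat -> X) (r : nat -> R) :
  complete_metric d -> (forall n, 0 <= r n) ->
  (forall eps, 0 < eps -> exists N, forall n, (N <= n)%nat -> r n < eps) ->
  (forall n, d (u (S n)) (u n) + r (S n) <= r n) ->
  exists l, forall n, d l (u n) <= r n.
Proof.
  intros Hc Hr0 Hr Hnest.
  assert (Hdrift : forall n k, d (u (n + k)%nat) (u n) <= r n - r (n + k)%nat).
  { intros n k; induction k as [|k IH].
    - rewrite Nat.add_0_r, dist_refl; lra.
    - rewrite Nat.add_succ_r.
      pose proof (Hnest (n + k)%nat); pose proof (dist_triangle (u (S (n + k))) (u (n + k)%nat) (u n)).
      lra. }
  assert (Hin : forall n m, (n <= m)%nat -> d (u m) (u n) <= r n).
  { intros n m Hnm; replace m with (n + (m - n))%nat by lia.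
    pose proof (Hdrift n (m - n)%nat); pose proof (Hr0 (n + (m - n))%nat); lra. }
  destruct (Hc u) as [l Hl].
  { intros eps Heps; destruct (Hr (eps / 2)) as [N HN]; [lra |].
    exists N; intros m n Hmn Hnn.
    pose proof (Hin N m Hmn); pose proof (Hin N n Hnn); pose proof (HN N (le_n N)).
    pose proof (dist_triangle (u m) (u N) (u n)); rewrite (dist_sym (u N) (u n)) in *; lra. }
  exists l; intros n; apply Rnot_lt_le; intros Hfar.
  destruct (Hl (d l (u n) - r n)) as [N HN]; [lra |].
  pose proof (HN (Nat.max N n) (Nat.le_max_l N n)).
  pose proof (Hin n (Nat.max N n) (Nat.le_max_r N n)).
  pose proof (dist_triangle l (u (Nat.max N n)) (u n)).
  rewrite (dist_sym l (u (Nat.max N n))) in *; lra.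
Qed.

Lemma separable_recurrent_seq (x0 : X) : separable d ->
  exists t : nat -> X, forall x eps N, 0 < eps -> exists n, (N <= n)%nat /\ d x (t n) < eps.
Proof.
  intros [D [[g Hg] HD]].
  set (e := fun k => epsilon (inhabits x0) (fun y => D y /\ g y = k)).
  (* every k equals n - (sqrt n)^2 for infinitely many n *)
  exists (fun n => e (n - Nat.sqrt n * Nat.sqrt n)%nat); intros x eps N Heps.
  destruct (HD x eps Heps) as [y [Dy Hy]].
  assert (Hey : e (g y) = y).
  { assert (Hspec : D (e (g y)) /\ g (e (g y)) = g y).
    { apply (epsilon_spec (inhabits x0) (fun z => D z /\ g z = g y)); exists y; auto. }
    apply Hg; tauto. }
  set (m := (N + g y)%nat); exists (m * m + g y)%nat; split; [nia |].
  assert (Hsqrt : Nat.sqrt (m * m + g y) = m) by (apply Nat.sqrt_unique; unfold m; nia).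
  rewrite Hsqrt, Nat.add_comm, Nat.add_sub, Hey; exact Hy.
Qed.

Lemma no_isolated_avoid_finite : no_isolated_points d ->
  forall y eps (x : nat -> X) K, 0 < eps ->
  exists w, d y w < eps /\ forall j, (j < K)%nat -> w <> x j.
Proof.
  intros Hni y eps x K Heps.
  destruct (fin_uniform_pos K (fun j e => x j <> y -> e <= d y (x j))) as [r [Hr Hfar]].
  { intros j e e' He' H Hne; specialize (H Hne); lra. }
  { intros j _; destruct (classic (x j = y)) as [E | E].
    - exists 1; split; [lra | tauto].
    - exists (d y (x j)); split; [apply dist_pos; auto | intros; lra]. }
  destruct (Hni y (Rmin eps r) (Rmin_pos _ _ Heps Hr)) as [w [Hwy Hw]].
  exists w; split; [pose proof (Rmin_l eps r); lra |].
  intros j Hj ->; specialize (Hfar j Hj).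
  destruct (classic (x j = y)) as [E | E]; [congruence |].
  pose proof (Rmin_r eps r); specialize (Hfar E); lra.
Qed.

Lemma avoid_finite_radius w (x : nat -> X) K :
  (forall j, (j < K)%nat -> w <> x j) ->
  exists r, 0 < r /\ forall j, (j < K)%nat -> r <= d w (x j).
Proof.
  intros Hw; apply fin_uniform_pos; [intros; lra |].
  intros j Hj; exists (d w (x j)); split; [apply dist_pos, Hw, Hj | lra].
Qed.

Lemma dense_avoid_finite (S : X -> Prop) : no_isolated_points d -> dense_set d S ->
  forall y eps (x : nat -> X) K, 0 < eps ->
  exists z, S z /\ d y z < eps /\ forall j, (j < K)%nat -> z <> x j.
Proof.
  intros Hni HS y eps x K Heps.
  destruct (no_isolated_avoid_finite Hni y eps x K Heps) as [w [Hyw Hw]].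
  destruct (avoid_finite_radius w x K Hw) as [r [Hr Hfar]].
  assert (Hgap : 0 < eps - d y w) by lra.
  destruct (HS w (Rmin (eps - d y w) r) (Rmin_pos _ _ Hgap Hr)) as [z [Sz Hz]].
  pose proof (Rmin_l (eps - d y w) r); pose proof (Rmin_r (eps - d y w) r).
  exists z; split; [exact Sz | split].
  - pose proof (dist_triangle y w z); lra.
  - intros j Hj ->; specialize (Hfar j Hj); lra.
Qed.

Lemma dense_injective_approx (S : X -> Prop) : no_isolated_points d -> dense_set d S ->
  forall (y : nat -> X) eps K, 0 < eps ->
  exists x : nat -> X,
    (forall i, (i < K)%nat -> S (x i) /\ d (y i) (x i) < eps) /\
    (forall i j, (i < K)%nat -> (j < K)%nat -> i <> j -> x i <> x j).
Proof.
  intros Hni HS y eps K Heps; induction K as [|K [x [Hx Hinj]]].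
  - exists y; split; intros; lia.
  - destruct (dense_avoid_finite S Hni HS (y K) eps x K Heps) as [z [Sz [Hz Hzx]]].
    exists (fun i => if Nat.eq_dec i K then z else x i); split.
    + intros i Hi; destruct (Nat.eq_dec i K) as [-> | HiK]; [auto | apply Hx; lia].
    + intros i j Hi Hj Hij.
      destruct (Nat.eq_dec i K) as [-> | HiK], (Nat.eq_dec j K) as [-> | HjK].
      * congruence.
      * apply Hzx; lia.
      * intros E; apply (Hzx i); [lia | auto].
      * apply Hinj; lia.
Qed.

Lemma D_k_of_separated f k (q : nat -> nat) (x : nat -> X) : (2 <= k)%nat ->
  (forall i j, (i < j)%nat -> (j < k)%nat -> forall M, exists N, forall n, (N <= n)%nat ->
     M < d (Nat.iter (q n) f (x i)) (Nat.iter (q n) f (x j))) ->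
  D_k d f k x.
Proof.
  intros Hk Hsep M N.
  destruct (fin_upper_bound N (fun v => d (Nat.iter v f (x 0%nat)) (Nat.iter v f (x 1%nat))))
    as [B HB].
  destruct (fin_uniform_nat k (fun j N1 => forall i, (i < j)%nat -> forall n, (N1 <= n)%nat ->
              Rmax M B < d (Nat.iter (q n) f (x i)) (Nat.iter (q n) f (x j)))) as [N1 HN1].
  { intros j N0 N0' HN0 H i Hij n Hn; apply H; [exact Hij | lia]. }
  { intros j Hj; apply fin_uniform_nat.
    - intros i N0 N0' HN0 H n Hn; apply H; lia.
    - intros i Hij; apply Hsep; lia. }
  pose proof (Rmax_l M B); pose proof (Rmax_r M B).
  (* [N <= q N1], since before time N the points x 0 and x 1 stay within B *)
  exists (q N1); split.
  - apply Nat.nlt_ge; intros Hq.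
    pose proof (HN1 1%nat ltac:(lia) 0%nat Nat.lt_0_1 N1 (le_n N1)); pose proof (HB (q N1) Hq).
    lra.
  - intros i j Hij Hjk; pose proof (HN1 j Hjk i Hij N1 (le_n N1)); lra.
Qed.

Lemma dense_D_k_of_separating_set f (q : nat -> nat) (S : X -> Prop) :
  no_isolated_points d -> dense_set d S ->
  (forall x y, S x -> S y -> x <> y -> forall M, exists N, forall n, (N <= n)%nat ->
     M < d (Nat.iter (q n) f x) (Nat.iter (q n) f y)) ->
  forall k, (2 <= k)%nat -> dense_in_power d k (D_k d f k).
Proof.
  intros Hni HS Hsep k Hk y eps Heps.
  destruct (dense_injective_approx S Hni HS y eps k Heps) as [x [Hx Hinj]].
  exists x; split.
  - apply (D_k_of_separated f k q x Hk); intros i j Hij Hjk.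
    apply Hsep; [apply Hx; lia | apply Hx; lia | apply Hinj; lia].
  - intros i Hi; rewrite dist_sym; apply Hx, Hi.
Qed.

Lemma separated_balls f (x : nat -> X) K m B : continuous_map d f -> 0 <= B ->
  (forall i j, (i < K)%nat -> (j < K)%nat -> i <> j ->
     B + 1 < d (Nat.iter m f (x i)) (Nat.iter m f (x j))) ->
  exists r, 0 < r /\ forall i j, (i < K)%nat -> (j < K)%nat -> i <> j ->
    3 * r < d (x i) (x j) /\
    forall y z, d (x i) y <= r -> d (x j) z <= r -> B < d (Nat.iter m f y) (Nat.iter m f z).
Proof.
  intros Hf HB Hfar.
  destruct (fin_uniform_pos K (fun i e => forall z, d (x i) z < e ->
              d (Nat.iter m f (x i)) (Nat.iter m f z) < 1/2)) as [delta [Hdelta Hcont]].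
  { intros i e e' He' H z Hz; apply H; lra. }
  { intros i _; exact (iter_continuous f Hf m (x i) (1/2) ltac:(lra)). }
  destruct (fin_uniform_pos K (fun i e => forall j, (j < K)%nat -> j <> i -> e <= d (x i) (x j)))
    as [g [Hg Hgap]].
  { intros i e e' He' H j Hj Hji; specialize (H j Hj Hji); lra. }
  { intros i Hi; apply fin_uniform_pos.
    - intros j e e' He' H Hji; specialize (H Hji); lra.
    - intros j Hj; destruct (Nat.eq_dec j i) as [-> | Hji]; [exists 1; split; [lra | tauto] |].
      exists (d (x i) (x j)); split; [| intros; lra].
      apply dist_pos; intros E; specialize (Hfar i j Hi Hj (not_eq_sym Hji)).
      rewrite E, dist_refl in Hfar; lra. }
  pose proof (Rmin_l (delta / 2) (g / 4)); pose proof (Rmin_r (delta / 2) (g / 4)).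
  exists (Rmin (delta / 2) (g / 4)); split; [apply Rmin_pos; lra |].
  intros i j Hi Hj Hij; split.
  - specialize (Hgap i Hi j Hj (not_eq_sym Hij)); lra.
  - intros y z Hy Hz.
    pose proof (Hcont i Hi y ltac:(lra)); pose proof (Hcont j Hj z ltac:(lra)).
    pose proof (Hfar i j Hi Hj Hij).
    pose proof (dist_triangle (Nat.iter m f (x i)) (Nat.iter m f y) (Nat.iter m f (x j))).
    pose proof (dist_triangle (Nat.iter m f y) (Nat.iter m f z) (Nat.iter m f (x j))).
    rewrite (dist_sym (Nat.iter m f z) (Nat.iter m f (x j))) in *; lra.
Qed.

(** * The construction *)

Section Construction.

Variable f : X -> X.
Hypothesis Hf : continuous_map d f.
Hypothesis HD : forall k, (2 <= k)%nat -> dense_in_power d k (D_k d f k).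

Record state := mk_state { centers : nat -> X; radius : R; time : nat }.

(* Centre i of stage n has children 2 i and 2 i + 1 at stage n + 1, and index
   2 ^ (n + 1) - 2 of stage n + 1 is a new root. *)
Record refines (target : X) (n : nat) (st st' : state) : Prop := {
  refines_radius_pos : 0 < radius st';
  refines_radius_small : radius st' <= / (INR n + 1);
  refines_nested : forall i, (i < 2 ^ S n - 2)%nat ->
    d (centers st' i) (centers st (Nat.div2 i)) + radius st' <= radius st;
  refines_root : d (centers st' (2 ^ S n - 2)) target < / (INR n + 1);
  refines_apart : forall i j, (i < 2 ^ S n - 1)%nat -> (j < 2 ^ S n - 1)%nat -> i <> j ->
    3 * radius st' < d (centers st' i) (centers st' j);
  refines_expand : forall i j, (i < 2 ^ S n - 1)%nat -> (j < 2 ^ S n - 1)%nat -> i <> j ->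
    forall x y, d (centers st' i) x <= radius st' -> d (centers st' j) y <= radius st' ->
    INR n + 1 < d (Nat.iter (time st') f x) (Nat.iter (time st') f y) }.

Lemma refines_exists target n st : 0 < radius st -> exists st', refines target n st st'.
Proof.
  intros Hr.
  (* one point more than needed, so that K >= 2 also when n = 0 *)
  set (K := (2 ^ S n)%nat).
  assert (HK : (2 <= K)%nat).
  { unfold K; rewrite Nat.pow_succ_r'; pose proof (Nat.pow_nonzero 2 n); lia. }
  set (y := fun i => if (i <? K - 2)%nat then centers st (Nat.div2 i) else target).
  assert (Hn : 0 < / (INR n + 1)) by (apply Rinv_0_lt_compat; pose proof (pos_INR n); lra).
  pose proof (Rmin_l (radius st / 2) (/ (INR n + 1))) as Heps1.
  pose proof (Rmin_r (radius st / 2) (/ (INR n + 1))) as Heps2.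
  set (eps := Rmin (radius st / 2) (/ (INR n + 1))) in *.
  assert (Heps : 0 < eps) by (apply Rmin_pos; lra).
  destruct (HD K HK y eps Heps) as [x [HxD Hxy]].
  destruct (HxD (INR n + 2) 0%nat) as [m [_ Hfar]].
  destruct (separated_balls f x K m (INR n + 1) Hf) as [r [Hr0 Hsep]].
  { pose proof (pos_INR n); lra. }
  { intros i j Hi Hj Hij; replace (INR n + 1 + 1) with (INR n + 2) by ring.
    destruct (proj1 (Nat.lt_gt_cases i j) Hij) as [Hlt | Hlt]; [now apply Hfar |].
    rewrite dist_sym; now apply Hfar. }
  pose proof (Rmin_l eps r); pose proof (Rmin_r eps r).
  exists (mk_state x (Rmin eps r) m); split; cbn [centers radius time]; fold K.
  - now apply Rmin_pos.
  - lra.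
  - intros i Hi; pose proof (Hxy i ltac:(unfold K in *; lia)) as Hi'.
    replace (y i) with (centers st (Nat.div2 i)) in Hi'; [lra |].
    unfold y; replace (i <? K - 2)%nat with true; [reflexivity |].
    symmetry; apply Nat.ltb_lt; exact Hi.
  - pose proof (Hxy (K - 2)%nat ltac:(lia)) as Hroot.
    replace (y (K - 2)%nat) with target in Hroot; [lra |].
    unfold y; cbv beta; now rewrite Nat.ltb_irrefl.
  - intros i j Hi Hj Hij; pose proof (proj1 (Hsep i j ltac:(lia) ltac:(lia) Hij)); lra.
  - intros i j Hi Hj Hij z w Hz Hw.
    apply (proj2 (Hsep i j ltac:(lia) ltac:(lia) Hij)); lra.
Qed.

Definition chain (tgt : nat -> X) (st : nat -> state) : Prop :=
  forall n, refines (tgt n) n (st n) (st (S n)).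

Lemma chain_exists (tgt : nat -> X) (x0 : X) : exists st, chain tgt st.
Proof.
  apply (nat_dependent_choice (fun st => 0 < radius st) (fun n => refines (tgt n) n)
           (mk_state (fun _ => x0) 1 0)); [cbn; lra |].
  intros n st Hst; destruct (refines_exists (tgt n) n st Hst) as [st' Hst'].
  exists st'; split; [apply (refines_radius_pos _ _ _ _ Hst') | exact Hst'].
Qed.

Section Branches.

Variables (tgt : nat -> X) (st : nat -> state).
Hypothesis Hst : chain tgt st.
Hypothesis Hc : complete_metric d.

Lemma radius_pos n : 0 < radius (st (S n)).
Proof. exact (refines_radius_pos _ _ _ _ (Hst n)). Qed.

Lemma radius_small eps : 0 < eps -> exists N, forall n, (N <= n)%nat -> radius (st n) < eps.
Proof.
  intros Heps; destruct (inv_succ_small eps Heps) as [N HN].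
  exists (S N); intros [|n] Hn; [lia |].
  pose proof (refines_radius_small _ _ _ _ (Hst n)); pose proof (HN n ltac:(lia)); lra.
Qed.

Definition branch_center (a : nat) (b : nat -> bool) (m : nat) : X :=
  centers (st (S a + m)%nat) (node a b m).

Lemma branch_center_nested a b m :
  d (branch_center a b (S m)) (branch_center a b m) + radius (st (S a + S m)%nat)
  <= radius (st (S a + m)%nat).
Proof.
  unfold branch_center; rewrite Nat.add_succ_r; cbn [node].
  pose proof (refines_nested _ _ _ _ (Hst (S a + m)%nat) (2 * node a b m + bit (b m))) as Hnest.
  rewrite div2_child in Hnest; apply Hnest.
  pose proof (node_lt a b m); pose proof (bit_le1 (b m)); rewrite Nat.pow_succ_r'; lia.
Qed.

Definition branch_point (a : nat) (b : nat -> bool) : X :=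
  epsilon (inhabits (centers (st 0) 0))
    (fun l => forall m, d l (branch_center a b m) <= radius (st (S a + m)%nat)).

Lemma branch_point_close a b m :
  d (branch_point a b) (branch_center a b m) <= radius (st (S a + m)%nat).
Proof.
  revert m; unfold branch_point; apply epsilon_spec.
  apply (nested_balls_limit (branch_center a b) (fun m => radius (st (S a + m)%nat)) Hc).
  - intros m; apply Rlt_le, radius_pos.
  - intros eps Heps; destruct (radius_small eps Heps) as [N HN].
    exists N; intros m Hmn; apply HN; lia.
  - intros m; apply branch_center_nested.
Qed.

Lemma branch_point_gap a b a' b' m m' : (S a + m = S a' + m')%nat ->
  node a b m <> node a' b' m' ->
  radius (st (S a + m)%nat) <= d (branch_point a b) (branch_point a' b').
Proof.
  intros Hstage Hne.
  pose proof (branch_point_close a b m) as C; pose proof (branch_point_close a' b' m') as C'.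
  pose proof (node_lt a b m) as Hi; pose proof (node_lt a' b' m') as Hj.
  unfold branch_center in C, C'; rewrite <- Hstage in C', Hj.
  change (S a + m)%nat with (S (a + m)) in *.
  pose proof (refines_apart _ _ _ _ (Hst (a + m)%nat) _ _ Hi Hj Hne) as Hapart.
  set (c := centers (st (S (a + m)%nat)) (node a b m)) in *.
  set (c' := centers (st (S (a + m)%nat)) (node a' b' m')) in *.
  pose proof (dist_triangle c (branch_point a b) c').
  pose proof (dist_triangle (branch_point a b) (branch_point a' b') c').
  rewrite (dist_sym c (branch_point a b)) in *; lra.
Qed.

Lemma branch_point_expand a b a' b' m m' : (S a + m = S a' + m')%nat ->
  node a b m <> node a' b' m' ->
  INR (a + m)%nat + 1 < d (Nat.iter (time (st (S a + m)%nat)) f (branch_point a b))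
                      (Nat.iter (time (st (S a + m)%nat)) f (branch_point a' b')).
Proof.
  intros Hstage Hne.
  pose proof (branch_point_close a b m) as C; pose proof (branch_point_close a' b' m') as C'.
  pose proof (node_lt a b m) as Hi; pose proof (node_lt a' b' m') as Hj.
  unfold branch_center in C, C'; rewrite <- Hstage in C', Hj.
  rewrite dist_sym in C, C'.
  exact (refines_expand _ _ _ _ (Hst (a + m)%nat) _ _ Hi Hj Hne _ _ C C').
Qed.

Lemma branch_points_separated a b a' b' : branch_point a b <> branch_point a' b' ->
  forall M, exists N, forall n, (N <= n)%nat ->
    M < d (Nat.iter (time (st n)) f (branch_point a b))
          (Nat.iter (time (st n)) f (branch_point a' b')).
Proof.
  intros Hne M; pose proof (dist_pos _ _ Hne) as Hd.
  destruct (radius_small (d (branch_point a b) (branch_point a' b') / 2)) as [N0 HN0]; [lra |].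
  set (m0 := (N0 + a')%nat); set (m0' := (N0 + a)%nat).
  assert (Hdiff : forall k, node a b (m0 + k) <> node a' b' (m0' + k)).
  { induction k as [|k IH]; rewrite ?Nat.add_0_r, ?Nat.add_succ_r; cbn [node].
    - intros E.
      pose proof (branch_point_close a b m0) as C; pose proof (branch_point_close a' b' m0') as C'.
      unfold branch_center in C, C'; rewrite <- E in C'.
      replace (S a' + m0')%nat with (S a + m0)%nat in C' by (unfold m0, m0'; lia).
      pose proof (HN0 (S a + m0)%nat ltac:(lia)).
      set (c := centers (st (S a + m0)%nat) (node a b m0)) in *.
      pose proof (dist_triangle (branch_point a b) c (branch_point a' b')).
      rewrite (dist_sym c (branch_point a' b')) in *; lra.
    - intros E; apply child_inj in E; tauto. }
  destruct (exists_nat_gt M) as [N1 HN1].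
  exists (S a + m0 + N1)%nat; intros n Hn.
  assert (exists k, n = S a + (m0 + k))%nat as [k ->] by (exists (n - (S a + m0))%nat; lia).
  pose proof (branch_point_expand a b a' b' (m0 + k) (m0' + k)
                ltac:(unfold m0, m0'; lia) (Hdiff k)).
  assert (INR N1 <= INR (a + (m0 + k))%nat) by (apply le_INR; lia); lra.
Qed.

Definition cantor_branch (a : nat) (t : R) : X := branch_point a (ternary_digits t).

Definition cantor_piece (a : nat) (x : X) : Prop :=
  exists t, cantor_ternary t /\ cantor_branch a t = x.

Definition branch_set (x : X) : Prop := exists a, cantor_piece a x.

Lemma cantor_branch_close_digits a s t m :
  d (cantor_branch a s) (cantor_branch a t) < radius (st (S a + m)%nat) ->
  forall k, (k < m)%nat -> ternary_digits s k = ternary_digits t k.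
Proof.
  intros Hclose; apply (proj1 (node_eq_iff a _ _ m)).
  destruct (Nat.eq_dec (node a (ternary_digits s) m) (node a (ternary_digits t) m))
    as [E | Hne]; [exact E |].
  pose proof (branch_point_gap a _ a _ m m eq_refl Hne); unfold cantor_branch in Hclose; lra.
Qed.

Lemma cantor_piece_homeomorphic a : homeomorphic_to_cantor d (cantor_piece a).
Proof.
  assert (Hinv : forall s eps, cantor_ternary s -> 0 < eps -> exists delta, 0 < delta /\
            forall t, cantor_ternary t -> d (cantor_branch a s) (cantor_branch a t) < delta ->
            Rabs (s - t) < eps).
  { intros s eps Hs Heps; destruct (pow_third_small eps Heps) as [m Hm3].
    exists (radius (st (S a + m)%nat)); split; [apply radius_pos |].
    intros t Ht Hclose.
    pose proof (ternary_digits_agree_close m s t Hs Ht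
                  (cantor_branch_close_digits a s t m Hclose)); lra. }
  exists (cantor_branch a); split; [| split; [| split; [| split]]].
  - intros t Ht; exists t; auto.
  - intros x [t [Ht <-]]; exists t; auto.
  - intros s t Hs Ht E; destruct (Req_dec s t) as [| Hne]; [assumption | exfalso].
    destruct (Hinv s (Rabs (s - t)) Hs) as [delta [Hdelta Hsmall]]; [apply Rabs_pos_lt; lra |].
    specialize (Hsmall t Ht); rewrite E, dist_refl in Hsmall; specialize (Hsmall Hdelta); lra.
  - intros s eps Hs Heps; destruct (radius_small (eps / 2)) as [N HN]; [lra |].
    exists ((1/3) ^ N); split; [apply pow_lt; lra |]; intros t Ht Hclose.
    assert (Hnode : node a (ternary_digits s) N = node a (ternary_digits t) N).
    { apply (proj2 (node_eq_iff a _ _ N)), (close_ternary_digits_agree N s t Hs Ht Hclose). }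
    pose proof (branch_point_close a (ternary_digits s) N) as C.
    pose proof (branch_point_close a (ternary_digits t) N) as C'.
    unfold branch_center in C, C'; rewrite Hnode in C; unfold cantor_branch.
    pose proof (HN (S a + N)%nat ltac:(lia)).
    set (c := centers (st (S a + N)%nat) (node a (ternary_digits t) N)) in *.
    pose proof (dist_triangle (branch_point a (ternary_digits s)) c
                  (branch_point a (ternary_digits t))).
    rewrite (dist_sym c (branch_point a (ternary_digits t))) in *; lra.
  - exact Hinv.
Qed.

Lemma branch_set_sigma_cantor : sigma_cantor d branch_set.
Proof.
  exists nat, cantor_piece; split; [exists (fun a => a); auto | split].
  - exact cantor_piece_homeomorphic.
  - intros x; split; auto.
Qed.

Lemma branch_set_dense :
  (forall x eps N, 0 < eps -> exists n, (N <= n)%nat /\ d x (tgt n) < eps) ->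
  dense_set d branch_set.
Proof.
  intros Htgt x eps Heps.
  destruct (inv_succ_small (eps / 4)) as [N HN]; [lra |].
  destruct (Htgt x (eps / 2) N) as [n [Hn Hx]]; [lra |].
  exists (cantor_branch n 0); split; [exists n, 0; split; [apply cantor_ternary0 | reflexivity] |].
  pose proof (branch_point_close n (ternary_digits 0) 0) as C.
  unfold branch_center in C; cbn [node] in C; rewrite Nat.add_0_r in C.
  pose proof (refines_root _ _ _ _ (Hst n)); pose proof (refines_radius_small _ _ _ _ (Hst n)).
  pose proof (HN n Hn); unfold cantor_branch.
  set (c := centers (st (S n)) (2 ^ S n - 2)%nat) in *.
  set (p := branch_point n (ternary_digits 0)) in *.
  pose proof (dist_triangle x (tgt n) p); pose proof (dist_triangle (tgt n) c p).
  rewrite (dist_sym (tgt n) c), (dist_sym c p) in *; lra.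
Qed.

End Branches.

End Construction.

End Metric.

Lemma sigma_cantor_empty {X : Type} (d : X -> X -> R) : sigma_cantor d (fun _ => False).
Proof.
  exists Empty_set, (fun _ _ => False); split; [| split].
  - exists (fun e : Empty_set => match e with end); intros [].
  - intros [].
  - intros x; split; [tauto | intros [[] _]].
Qed.

Theorem corollary2p5 (X : Type) (d : X -> X -> R) (f : X -> X) :
  is_metric d -> complete_metric d -> separable d -> no_isolated_points d ->
  continuous_map d f ->
  ((forall k : nat, (2 <= k)%nat -> dense_in_power d k (D_k d f k))
   <->
   (exists (q : nat -> nat) (S : X -> Prop),
      sigma_cantor d S /\ dense_set d S /\
      forall x y, S x -> S y -> x <> y ->
        forall M, exists N, forall n, (N <= n)%nat ->
          M < d (Nat.iter (q n) f x) (Nat.iter (q n) f y))).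
Proof.
  intros Hm Hc Hsep Hni Hf; split.
  2: { intros (q & S & _ & HS & Hscr); exact (dense_D_k_of_separating_set d Hm f q S Hni HS Hscr). }
  intros HD; destruct (classic (inhabited X)) as [[x0] | Hempty].
  2: { exists (fun _ => 0%nat), (fun _ => False); split; [apply sigma_cantor_empty |].
       split; [intros x; contradiction (Hempty (inhabits x)) | tauto]. }
  destruct (separable_recurrent_seq d x0 Hsep) as [tgt Htgt].
  destruct (chain_exists d Hm f Hf HD tgt x0) as [st Hst].
  exists (fun n => time (st n)), (branch_set d st); split; [| split].
  - exact (branch_set_sigma_cantor d Hm f tgt st Hst Hc).
  - exact (branch_set_dense d Hm f tgt st Hst Hc Htgt).
  - intros x y [a [s [_ <-]]] [a' [t [_ <-]]] Hne.
    exact (branch_points_separated d Hm f tgt st Hst Hc a _ a' _ Hne).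
Qed.
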